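(* Let $\delta\in(0,1)$, $\epsilon>0$, $\gamma^*\ge0$, and consider the progressive sampling algorithm PS-REG+ (described in the context) run on a simulation-based game with these parameters. If PS-REG+ returns an empirical utility function $\hat u$, then with probability at least $1-\delta$ it holds that $E(u)\subseteq E_{2\epsilon}(\hat u)$ and $E_\gamma(\hat u)\subseteq E_{2\epsilon+\gamma}(u)$ for all $0\le\gamma\le\gamma^*$, where $u$ is the true utility function.
   Context: Games. A normal-form game has a finite set of players $P$, finite pure strategy sets $S_p$, pure profile space $\mathbf{S}=\prod_pS_p$ and utility $u:\mathbf{S}\to\mathbb{R}^{|P|}$. For a profile $s$ and player $p$, $A_{p,s}$ is the set of pure profiles obtained from $s$ by replacing $p$'s strategy by any $t\in S_p$. $\mathrm{Reg}_p(s;u)=\sup_{s'\in A_{p,s}}u_p(s')-u_p(s)$, $\mathrm{Reg}(s;u)=\max_p\mathrm{Reg}_p(s;u)$; $E_\gamma(u)=\{s\in\mathbf{S}:\mathrm{Reg}(s;u)\le\gamma\}$, $E(u)=E_0(u)$. Simulation-based game: a simulator which, queried at a pure profile $s$, returns an independent random utility vector with coordinates in $[a_s,b_s]$; $c=\sup_s(b_s-a_s)$; the true utility $u(s)$ is the expected simulator output. Index set $\mathcal{I}=P\times\mathbf{S}$. Progressive sampling algorithm: schedule $m_1,\dots,m_T$, $M_t=m_1+\dots+m_t$. All indices start active. At iteration $t$, for each active $(p,s)$, draw $m_t$ fresh samples of $p$'s utility at $s$, let $\hat u^{(t)}_p(s)$ be the mean of all $M_t$ samples, and compute a (non-uniform,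 index-specific) deviation bound $\hat\epsilon^{(t)}_p(s)$ with $|u_p(s)-\hat u^{(t)}_p(s)|\le\hat\epsilon^{(t)}_p(s)$ with probability at least $1-\delta/(|\mathcal{I}|T)$. Pruned indices are no longer sampled and retain their last values of $\hat u^{(t)}$ and $\hat\epsilon^{(t)}$. After pruning, if no index is active the algorithm returns $\hat u=\hat u^{(t)}$; if the schedule is exhausted with active indices it returns nothing. Define the regret lower bound $\mathrm{Reg}^\downarrow_p(s;\hat u^{(t)})=\sup_{s'\in A_{p,s}}\big(\hat u^{(t)}_p(s')-\hat\epsilon^{(t)}_p(s')\big)-\big(\hat u^{(t)}_p(s)+\hat\epsilon^{(t)}_p(s)\big)$. PS-REG+ prunes an active index $(p,s)$ at iteration $t$ if $\hat\epsilon^{(t)}_p(s)\le\epsilon$ (well-estimated pruning) or if $\mathrm{Reg}^\downarrow_p(s;\hat u^{(t)})>\max\{0,\ \gamma^*+\epsilon-\hat\epsilon^{(t)}_p(s)\}$ (regret pruning). *)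

From HB Require Import structures.
From mathcomp Require Import all_boot all_order all_algebra.
From mathcomp Require Import all_classical all_reals all_analysis.
Set Implicit Arguments. Unset Strict Implicit. Unset Printing Implicit Defensive.
Import Order.TTheory GRing.Theory Num.Theory.
Local Open Scope ring_scope.

Section Game.
Variables (R : realType) (Pl : finType) (St : Pl -> finType).

Definition prof := {dffun forall p : Pl, St p}.

Definition dev (p : Pl) (s s' : prof) : bool :=
  [forall q, (q != p) ==> (s' q == s q)].

Definition util := prof -> Pl -> R.

(* Reg_p(s;u) = sup_{s' in A_{p,s}} u_p(s') - u_p(s).  Since s \in A_{p,s}
   this sup is >= 0, so seeding the finite max with 0 is exact. *)
Definition Regp (u : util) (p : Pl) (s : prof) : R :=
  \big[Num.max/0]_(s' | dev p s s') (u s' p - u s p).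

Definition Reg (u : util) (s : prof) : R := \big[Num.max/0]_(p : Pl) Regp u p s.

Definition Egam (gamma : R) (u : util) : {set prof} := [set s | Reg u s <= gamma].

(* Reg^down_p(s; uh) with deviation bounds eh; the max is seeded with the
   s' = s term, which belongs to the range, so it is exact. *)
Definition Regdown (uh eh : util) (p : Pl) (s : prof) : R :=
  (\big[Num.max/(uh s p - eh s p)]_(s' | dev p s s') (uh s' p - eh s' p))
  - (uh s p + eh s p).

Definition prunable (eps gstar : R) (uh eh : util) (i : Pl * prof) : bool :=
  (eh i.2 i.1 <= eps) ||
  (Num.max 0 (gstar + eps - eh i.2 i.1) < Regdown uh eh i.1 i.2).

(* U t, Eb t : empirical mean and deviation
   bound at iteration t (for every index; only used while the index is active).
   State: active index set, current tables (pruned indices keep last values). *)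
Fixpoint psreg_loop (eps gstar : R) (U Eb : nat -> util) (t fuel : nat)
    (A : {set Pl * prof}) (uh eh : util) : option util :=
  match fuel with
  | 0 => None
  | fuel'.+1 =>
    let uh' := fun s p => if (p, s) \in A then U t s p else uh s p in
    let eh' := fun s p => if (p, s) \in A then Eb t s p else eh s p in
    let A' := [set i in A | ~~ prunable eps gstar uh' eh' i] in
    if A' == finset.set0 then Some uh'
    else psreg_loop eps gstar U Eb t.+1 fuel' A' uh' eh'
  end.

Definition psreg (eps gstar : R) (U Eb : nat -> util) (T : nat) : option util :=
  psreg_loop eps gstar U Eb 1 T [set: Pl * prof] (fun _ _ => 0) (fun _ _ => 0).

Definition Msched (m : nat -> nat) (t : nat) : nat := \sum_(1 <= i < t.+1) m i.

(* empirical mean of the first M_t samples; X k w s p = k-th simulator sample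
   of p's utility at s *)
Definition Uhat (m : nat -> nat) {T : Type} (X : nat -> T -> util) (t : nat)
    (w : T) : util :=
  fun s p => (\sum_(k < Msched m t) X k w s p) / (Msched m t)%:R.

End Game.

Set Warnings "-notation-overridden -ambiguous-paths -notation-incompatible-prefix".
From mathcomp Require Import all_boot all_order all_algebra.
From mathcomp Require Import all_classical all_reals all_analysis.
From mathcomp Require Import ring lra zify.
Import Order.TTheory GRing.Theory Num.Theory.
Set Implicit Arguments. Unset Strict Implicit.
Local Open Scope ring_scope.

(* On the event that all |P| |S| T deviation bounds of the run are valid, which
   by the union bound has probability at least 1 - delta, every index (p, s)
   ends up either well estimated (eh <= eps) or regret-pruned, and a valid
   regret pruning exhibits a deviation s' with
   u_p(s') > uh_p(s) + max(eh_p(s), gstar + eps).  Neither a Nash equilibrium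
   of u nor a best response of u admits such a deviation, so the indices that
   matter are eps-accurate, which gives both inclusions; the margin
   gstar + eps is what rules out regret-pruning a profile whose empirical
   regret is at most gamma <= gstar. *)

Section Equilibria.
Variables (R : realType) (Pl : finType) (St : Pl -> finType).
Local Notation prof := (prof St).
Local Notation util := (util R St).

Lemma dev_refl p (s : prof) : dev p s s.
Proof. by apply/forallP => q; apply/implyP. Qed.

Lemma dev_trans p (s s' s'' : prof) : dev p s s' -> dev p s' s'' -> dev p s s''.
Proof.
move=> /forallP ss' /forallP s's''; apply/forallP => q; apply/implyP => qp.
by move: (ss' q) (s's'' q); rewrite qp /= => /eqP <- /eqP ->.
Qed.

Lemma EgamP g (v : util) s : 0 <= g ->
  s \in Egam g v <-> forall p s', dev p s s' -> v s' p - v s p <= g.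
Proof.
move=> g0; rewrite inE; split.
  move=> /bigmax_leP[_ regp] p s' ps'.
  by have /bigmax_leP[_] := regp p isT; apply.
move=> reg; apply/bigmax_leP; split=> // p _.
by apply/bigmax_leP; split=> // s'; apply: reg.
Qed.

Lemma best_deviation (v : util) p s :
  exists2 z, dev p s z & forall s', dev p s s' -> v s' p <= v z p.
Proof. by case: (arg_maxP (fun z => v z p) (dev_refl p s)) => z dz zmax; exists z. Qed.

End Equilibria.

Section Pruning.
Variables (R : realType) (Pl : finType) (St : Pl -> finType).
Variables (u : util R St) (eps gstar : R).
Local Notation prof := (prof St).
Local Notation util := (util R St).

Definition covers (uh eh : util) p s := `|u s p - uh s p| <= eh s p.

Definition prune_sound (uh eh : util) p (s : prof) :=
  eh s p <= eps \/
  exists2 s', dev p s s' & uh s p + Num.max (eh s p) (gstar + eps) < u s' p.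

Lemma coversP (uh eh : util) p s :
  covers uh eh p s -> u s p - eh s p <= uh s p <= u s p + eh s p.
Proof. by rewrite /covers ler_norml => /andP[? ?]; apply/andP; split; lra. Qed.

Lemma regret_prune_witness (uh eh : util) p s :
  (forall s', covers uh eh p s') ->
  Num.max 0 (gstar + eps - eh s p) < Regdown uh eh p s ->
  exists2 s', dev p s s' & uh s p + Num.max (eh s p) (gstar + eps) < u s' p.
Proof.
move=> cov; set y := uh s p + _.
have -> : Num.max 0 (gstar + eps - eh s p) = y - (uh s p + eh s p).
  by rewrite /y addr_maxr addr_maxl; congr Num.max; ring.
have [s' /andP[ds' above]|none] := pickP (fun s' => dev p s s' && (y < u s' p)).
  by exists s'.
have below s' : dev p s s' -> uh s' p - eh s' p <= y.
  move=> ds'; have /andP[_ hi] := coversP (cov s').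
  by move: (none s'); rewrite ds' /= => /negbT; rewrite -leNgt; lra.
rewrite /Regdown ltrBrDr subrK ltNge => /negP[]; apply/bigmax_leP.
by split=> [|s' /below //]; apply: below (dev_refl p s).
Qed.

Lemma prunable_sound (uh eh : util) p s :
  (forall s', covers uh eh p s') ->
  prunable eps gstar uh eh (p, s) -> prune_sound uh eh p s.
Proof. by move=> cov /orP[|/(regret_prune_witness cov)]; [left | right]. Qed.

Lemma prune_sound_small (uh eh : util) p s : prune_sound uh eh p s ->
  (forall s', dev p s s' -> u s' p <= uh s p + Num.max (eh s p) (gstar + eps)) ->
  eh s p <= eps.
Proof. by case=> // -[s' ds' above] /(_ s' ds'); rewrite leNgt above. Qed.

Lemma prune_sound_upper (uh eh : util) p s :
  covers uh eh p s -> prune_sound uh eh p s ->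
  uh s p <= u s p + eps \/ exists2 s', dev p s s' & uh s p < u s' p.
Proof.
move=> cov [small|[s' ds' above]].
  by left; have /andP[_ hi] := coversP cov; lra.
right; exists s' => //; apply: le_lt_trans above.
by rewrite lerDl le_max (le_trans (normr_ge0 _) cov).
Qed.

Section Guarantees.
Variables (uh eh : util).
Hypotheses (covered : forall p s, covers uh eh p s)
  (pruned : forall p s, prune_sound uh eh p s).

Lemma Egam0_sub_Egam2eps s : 0 <= eps ->
  s \in Egam 0 u -> s \in Egam (2 * eps) uh.
Proof.
move=> eps_ge0 /EgamP-/(_ (lexx 0)) nash; apply/EgamP; [lra | move=> p s' ds'].
have best s'' : dev p s s'' -> u s'' p <= u s p by move=> /(nash p); lra.
have /andP[lo hi] := coversP (covered p s).
have eh_small : eh s p <= eps.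
  apply: prune_sound_small (pruned p s) _ => s'' /best.
  have : eh s p <= Num.max (eh s p) (gstar + eps) by rewrite le_max lexx.
  lra.
have uh_s' : uh s' p <= u s p + eps.
  case: (prune_sound_upper (covered p s') (pruned p s')) => [|[s'' ds'' ?]].
    by have := best s' ds'; lra.
  by have := best s'' (dev_trans ds' ds''); lra.
lra.
Qed.

Lemma Egam_sub_Egam_add gamma s : 0 <= eps -> 0 <= gamma <= gstar ->
  s \in Egam gamma uh -> s \in Egam (2 * eps + gamma) u.
Proof.
move=> eps_ge0 /andP[gamma_ge0 gamma_le] /(EgamP _ _ gamma_ge0) eqm.
apply/EgamP; [lra | move=> p s' ds'].
have [z dz zbest] := best_deviation u p s.
have /andP[lo_z hi_z] := coversP (covered p z).
have /andP[lo_s hi_s] := coversP (covered p s).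
have eqm_z := eqm p z dz.
have eh_z_small : eh z p <= eps.
  apply: prune_sound_small (pruned p z) _ => s'' dzs''.
  have := zbest s'' (dev_trans dz dzs'').
  have : eh z p <= Num.max (eh z p) (gstar + eps) by rewrite le_max lexx.
  lra.
have eh_s_small : eh s p <= eps.
  apply: prune_sound_small (pruned p s) _ => s'' /zbest.
  have : gstar + eps <= Num.max (eh s p) (gstar + eps) by rewrite le_max lexx orbT.
  lra.
have := zbest s' ds'; lra.
Qed.

End Guarantees.

End Pruning.

Section Algorithm.
Variables (R : realType) (Pl : finType) (St : Pl -> finType).
Variables (u : util R St) (eps gstar : R) (U Eb : nat -> util R St) (T : nat).
Local Notation settled uh eh p s :=
  (covers u uh eh p s /\ prune_sound u eps gstar uh eh p s).
Hypothesis bounds_valid :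
  forall t, (1 <= t <= T)%N -> forall p s, covers u (U t) (Eb t) p s.

Lemma psreg_loop_settled fuel t (A : {set Pl * prof St}) uh eh uh0 :
  (0 < t)%N -> (t + fuel <= T.+1)%N ->
  (forall p s, (p, s) \notin A -> settled uh eh p s) ->
  psreg_loop eps gstar U Eb t fuel A uh eh = Some uh0 ->
  exists eh0, forall p s, settled uh0 eh0 p s.
Proof.
elim: fuel t A uh eh => [//|fuel IH] t A uh eh t_gt0 t_le inv /=.
set uh' := (fun s p => if (p, s) \in A then U t s p else uh s p).
set eh' := (fun s p => if (p, s) \in A then Eb t s p else eh s p).
set A' := [set i in A | _].
have cov p s : covers u uh' eh' p s.
  rewrite /covers /uh' /eh'; case: ifP => [_ | /negbT/inv[] //].
  by apply: bounds_valid; lia.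
have inv' p s : (p, s) \notin A' -> settled uh' eh' p s.
  rewrite inE negb_and negbK => /orP[notA | prun]; split=> //.
    by have [_] := inv p s notA; rewrite /prune_sound /uh' /eh' (negbTE notA).
  exact: prunable_sound.
case: eqP => [A'0 [<-] | _]; first by exists eh' => p s; apply: inv'; rewrite A'0 inE.
by apply: IH => //; lia.
Qed.

Lemma psreg_settled uh :
  psreg eps gstar U Eb T = Some uh -> exists eh, forall p s, settled uh eh p s.
Proof. by apply: psreg_loop_settled; rewrite ?add1n // => p s; rewrite inE. Qed.

Lemma psreg_equilibria uh : 0 <= eps ->
  psreg eps gstar U Eb T = Some uh ->
  (forall s, s \in Egam 0 u -> s \in Egam (2 * eps) uh) /\
  (forall gamma, 0 <= gamma <= gstar ->
     forall s, s \in Egam gamma uh -> s \in Egam (2 * eps + gamma) u).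
Proof.
move=> eps_ge0 /psreg_settled[eh all_settled].
have covered p s := (all_settled p s).1; have pruned p s := (all_settled p s).2.
split=> [s | gamma gamma_range s]; first exact: Egam0_sub_Egam2eps.
exact: Egam_sub_Egam_add.
Qed.

End Algorithm.

Section UnionBound.
Local Open Scope classical_set_scope.
Variables (R : realType) (d : measure_display) (Omega : measurableType d)
  (Pr : probability Omega R).

Lemma probability_setI_ge (A B : set Omega) a b :
  measurable A -> measurable B -> (a%:E <= Pr A)%E -> (b%:E <= Pr B)%E ->
  ((a + b - 1)%:E <= Pr (A `&` B))%E.
Proof.
move=> mA mB; have mAB := measurableI _ _ mA mB.
have PrE X : measurable X -> Pr X = (fine (Pr X))%:E.
  by move=> mX; rewrite fineK // fin_num_measure.
have : (Pr (~` (A `&` B)) <= Pr (~` A) + Pr (~` B))%E.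
  by rewrite setCI; apply: measureU2; apply: measurableC.
rewrite !probability_setC // (PrE _ mA) (PrE _ mB) (PrE _ mAB).
by rewrite -!EFinB -!EFinD !lee_fin; lra.
Qed.

Lemma probability_bigcap_ge (I : finType) (F : I -> set Omega) c :
  (forall i, measurable (F i) /\ ((1 - c)%:E <= Pr (F i))%E) ->
  measurable [set w | forall i, F i w] /\
  ((1 - #|I|%:R * c)%:E <= Pr [set w | forall i, F i w])%E.
Proof.
move=> hF.
suff /(_ (enum I)) : forall l : seq I,
    measurable [set w | forall i, i \in l -> F i w] /\
    ((1 - (size l)%:R * c)%:E <= Pr [set w | forall i, i \in l -> F i w])%E.
  have -> : [set w | forall i, i \in enum I -> F i w] = [set w | forall i, F i w].
    by apply/seteqP; split=> w /= Fw i => [|_]; apply: Fw; rewrite ?mem_enum.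
  by rewrite -cardE.
elim=> [|i l [ml Prl]].
  have -> : [set w | forall i, i \in [::] -> F i w] = setT by apply/seteqP; split.
  by rewrite probability_setT mul0r subr0.
have -> : [set w | forall j, j \in i :: l -> F j w] =
    F i `&` [set w | forall j, j \in l -> F j w].
  apply/seteqP; split=> w /=.
    by move=> Fw; split=> [|j jl]; apply: Fw; rewrite inE ?eqxx ?jl ?orbT.
  by move=> [Fiw Flw] j; rewrite inE => /orP[/eqP -> // | /Flw].
have [mi Pri] := hF i; split; first exact: measurableI.
apply: le_trans (probability_setI_ge mi ml Pri Prl).
by rewrite lee_fin /= -addn1 natrD; lra.
Qed.

End UnionBound.

Theorem theorem7 (R : realType) (d : measure_display) (Omega : measurableType d)
  (Pr : probability Omega R) (Pl : finType) (St : Pl -> finType)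
  (u : util R St) (X : nat -> Omega -> util R St) (a b : prof St -> R)
  (m : nat -> nat) (T : nat) (Eb : nat -> Omega -> util R St)
  (delta eps gstar : R) :
  0 < delta < 1 -> 0 < eps -> 0 <= gstar ->
  (forall t, (1 <= t <= T)%N -> (0 < m t)%N) ->
  (* simulator outputs lie in [a_s, b_s] *)
  (forall k w s p, a s <= X k w s p <= b s) ->
  (* true utility = expected simulator output *)
  (forall k s p, Pr.-integrable setT (fun w => (X k w s p)%:E) /\
     (\int[Pr]_w (X k w s p)%:E = (u s p)%:E)%E) ->
  (* validity of the index-specific deviation bounds at each iteration *)
  (forall t, (1 <= t <= T)%N -> forall s p,
     let ev := [set w | `|u s p - Uhat m X t w s p| <= Eb t w s p]%classic in
     measurable ev /\
     (Pr ev >= (1 - delta / (#|Pl| * #|{: prof St}| * T)%:R)%:E)%E) ->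
  exists G : set Omega, measurable G /\ (Pr G >= (1 - delta)%:E)%E /\
    forall w, G w -> forall uh,
      psreg eps gstar (fun t => Uhat m X t w) (fun t => Eb t w) T = Some uh ->
      (forall s, s \in Egam 0 u -> s \in Egam (2 * eps) uh) /\
      (forall gamma, 0 <= gamma <= gstar ->
         forall s, s \in Egam gamma uh -> s \in Egam (2 * eps + gamma) u).
Proof.
(* Only the validity of the deviation bounds matters, not how the simulator
   samples make them valid. *)
move=> /andP[delta_gt0 _] eps_gt0 _ _ _ _ bounds_valid.
pose n := (#|Pl| * #|{: prof St}| * T)%N.
pose event (i : Pl * prof St * 'I_T) :=
  [set w | covers u (Uhat m X i.2.+1 w) (Eb i.2.+1 w) i.1.1 i.1.2]%classic.
have [mG PrG] := @probability_bigcap_ge _ _ _ Pr _ event (delta / n%:R)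
  (fun '(p, s, t) => bounds_valid t.+1 (ltn_ord t) s p).
exists [set w | forall i, event i w]%classic; split=> //; split.
  apply: le_trans PrG; rewrite lee_fin lerD2l lerN2 !card_prod card_ord -/n.
  have [->|n_gt0] := posnP n; first by rewrite mul0r ltW.
  by rewrite mulrC divfK // pnatr_eq0 -lt0n.
move=> w Gw uh; apply: psreg_equilibria (ltW eps_gt0) => t /andP[t_gt0 t_le] p s.
have t_pred_lt : (t.-1 < T)%N by lia.
by have := Gw (p, s, Ordinal t_pred_lt); rewrite /event /= prednK.
Qed.
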